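(* Let $a,b\in\mathbb{Z}$ with $\gcd(a,b)=1$ and $a^2+ab-b^2\not\equiv0\pmod5$. Let $m\ge1$ with $5\nmid m$, and suppose $\{G_n(a,b)\}$ is complete mod $m$. Then $\{G_n(a,b)\}$ is complete mod $5m$.
   Context: For integers $a,b$ with $\gcd(a,b)=1$, the Gibonacci sequence $\{G_n(a,b)\}_{n\ge1}$ is defined by $G_1=a$, $G_2=b$, $G_{n+1}=G_{n-1}+G_n$. A sequence is complete mod $m$ if every residue class modulo $m$ contains some term of the sequence. *)

From Stdlib Require Import ZArith.
Open Scope Z_scope.

(* Gibonacci sequence, indexed from 1: G 1 = a, G 2 = b, G (n+1) = G (n-1) + G n.
   gib_aux a b k returns the pair (G_(k+1), G_(k+2)). *)
Fixpoint gib_aux (a b : Z) (k : nat) : Z * Z :=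
  match k with
  | O => (a, b)
  | S k' => let (x, y) := gib_aux a b k' in (y, x + y)
  end.

(* G a b n = G_n(a,b) for n >= 1 (G a b 0 is the junk value b - a = G_0). *)
Definition G (a b : Z) (n : nat) : Z :=
  match n with
  | O => b - a
  | S k => fst (gib_aux a b k)
  end.

Definition complete_mod (s : nat -> Z) (m : Z) : Prop :=
  forall r : Z, exists n : nat, (1 <= n)%nat /\ (s n - r) mod m = 0.

(* (1) Modulo m, G is periodic, and it has a period P that is not divisible
       by 5.  If Q = 5P is a period and P is not, the difference sequence
       h_n = G_(n+P) - G_n is nonzero modulo m while its P-spaced five-term sums
       vanish modulo m.  After dividing out a common factor, this happens
       modulo a prime p | m, p != 5.  In an algebraic closure of F_p let al be
       a root of X^2 = X + 1.  If Frobenius fixes al, every golden sequence has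
       period p - 1 modulo p, so G is not complete modulo p.  Otherwise the
       Binet coefficient of h is nonzero and 1 + y + ... + y^4 vanishes for
       y = al^P, which forces -(y + y^-1) to be a Frobenius-fixed golden root.

   (2) Modulo 5 the terms G_(n0 + 4jP), j < 5, run through all residues when
       5 does not divide P and the norm is nonzero; this is a finite check
       after reducing a, b modulo 5 and indices modulo 20.

   Combining: for a residue R take n0 with G_n0 = R modulo m; then
   G_(n0 + 4jP) = R modulo m for all j, and modulo 5 for a suitable j. *)

From Stdlib Require Import ZArith Lia Znumtheory.
From mathcomp Require Import all_boot all_algebra closed_field.
From mathcomp Require Import zify ssrZ ring.
Set Implicit Arguments. Unset Strict Implicit. Unset Printing Implicit Defensive.
Import GRing.Theory.
Local Open Scope Z_scope.

Lemma nat_ind2 (P : nat -> Prop) :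
  P 0%N -> P 1%N -> (forall n, P n -> P n.+1 -> P n.+2) -> forall n, P n.
Proof.
move=> P0 P1 PS n; suff [] : P n /\ P n.+1 by [].
by elim: n => [|n [Pn Pn1]]; split => //; apply: PS.
Qed.

Lemma dvd_sub_trans m x y z : (m | x - y) -> (m | y - z) -> (m | x - z).
Proof.
move=> H1 H2; have -> : x - z = (x - y) + (y - z) by ring.
exact: Z.divide_add_r.
Qed.

Lemma dvd_sub_sym m x y : (m | x - y) -> (m | y - x).
Proof. by move=> [k Hk]; exists (- k); lia. Qed.

Definition golden (s : nat -> Z) : Prop := forall n, s n.+2 = s n + s n.+1.

Lemma golden_G a b : golden (G a b).
Proof. by case=> [|n]; rewrite /G /=; [ring | case: (gib_aux a b n)]. Qed.

Lemma golden_dvd (s : nat -> Z) m :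
  golden s -> (m | s 0%N) -> (m | s 1%N) -> forall n, (m | s n).
Proof. by move=> gs H0 H1; apply: nat_ind2 => // n Hn Hn1; rewrite gs; apply: Z.divide_add_r. Qed.

Lemma golden_shift_sub (s : nat -> Z) k : golden s -> golden (fun n => s (n + k)%N - s n).
Proof. by move=> gs n /=; rewrite !addSn !gs; ring. Qed.

Definition period_mod (s : nat -> Z) (m : Z) (P : nat) : Prop :=
  forall n, (m | s (n + P)%N - s n).

Lemma period_of_initial (s : nat -> Z) m P :
  golden s -> (m | s P - s 0%N) -> (m | s P.+1 - s 1%N) -> period_mod s m P.
Proof. by move=> gs H0 H1; apply: (golden_dvd (golden_shift_sub P gs)). Qed.

Lemma period_mul (s : nat -> Z) m P k : period_mod s m P -> period_mod s m (k * P).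
Proof.
move=> HP n; elim: k => [|k IH]; first by rewrite addn0 Z.sub_diag; apply: Z.divide_0_r.
by rewrite mulSn addnCA addnC; apply: dvd_sub_trans (HP _) IH.
Qed.

Lemma period_mod_reduce (s : nat -> Z) m P n : period_mod s m P -> (m | s n - s (n %% P)%N).
Proof. by move=> HP; rewrite {1}(divn_eq n P) addnC; apply: period_mul. Qed.

Lemma G_linear a b n : G a b n = a * G 1 0 n + b * G 0 1 n.
Proof.
move: n; apply: nat_ind2; try by rewrite /G /=; ring.
by move=> n IH0 IH1; rewrite !golden_G IH0 IH1; ring.
Qed.

Section Residues.
Variable m : Z.
Hypothesis m_pos : 0 < m.

Lemma residue_lt x : (Z.to_nat (x mod m) < Z.to_nat m)%N.
Proof. have := Z.mod_pos_bound x m m_pos; lia. Qed.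

Definition residue (x : Z) : 'I_(Z.to_nat m) := Ordinal (residue_lt x).

Lemma residue_eq x y : residue x = residue y -> (m | x - y).
Proof.
move=> /(congr1 val) /= E; apply/Z.mod_divide; first lia.
have := Z.mod_pos_bound x m m_pos; have := Z.mod_pos_bound y m m_pos => Hy Hx.
by rewrite Zminus_mod (_ : x mod m = y mod m) ?Z.sub_diag //; lia.
Qed.

(* Pigeonhole: two of the first m^2 + 1 consecutive pairs agree modulo m. *)
Lemma state_collision (s : nat -> Z) :
  exists i j, (i < j)%N /\ (m | s j - s i) /\ (m | s j.+1 - s i.+1).
Proof.
pose M := Z.to_nat m.
pose f (k : 'I_(M * M).+1) := (residue (s k), residue (s k.+1)).
have [/injectiveP finj | ] := boolP (injectiveb f).
  by have := leq_card f finj; rewrite card_prod !card_ord ltnn.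
case/injectivePn => i [j ij fij].
have /residue_eq Hi := congr1 fst fij; have /residue_eq Hi1 := congr1 snd fij.
case: (ltngtP i j) => [lt | gt | /val_inj eq]; last by rewrite eq eqxx in ij.
- by exists i, j; split; [| split; apply: dvd_sub_sym].
- by exists j, i.
Qed.
End Residues.

(* Every golden sequence is purely periodic modulo m > 0: a collision of pairs
   can be pulled back to index 0 because the recurrence is invertible. *)
Lemma golden_period_exists (s : nat -> Z) m :
  golden s -> 0 < m -> exists2 P, (0 < P)%N & period_mod s m P.
Proof.
move=> gs m_pos; have [i [j [ij [H0 H1]]]] := state_collision m_pos s.
set d := (j - i)%N.
suff back t : (t <= i)%N ->
    (m | s (i - t + d)%N - s (i - t)%N) /\ (m | s (i - t + d).+1 - s (i - t).+1).
  have [B0 B1] := back i (leqnn i); rewrite subnn in B0 B1.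
  by exists d; [rewrite subn_gt0 | apply: period_of_initial].
elim: t => [|t IH] ti; first by rewrite subn0 /d subnKC // ltnW.
have [B0 B1] := IH (ltnW ti).
rewrite (_ : i - t = (i - t.+1).+1)%N ?addSn in B0 B1; last by lia.
split => //.
have -> : s (i - t.+1 + d)%N - s (i - t.+1)%N =
  (s (i - t.+1 + d).+2 - s (i - t.+1).+2) - (s (i - t.+1 + d).+1 - s (i - t.+1).+1).
  by rewrite !gs; ring.
exact: Z.divide_sub_r.
Qed.

(* A sequence with a period T < N modulo N takes at most T residues, hence is
   not complete modulo N. *)
Lemma not_complete_of_period (s : nat -> Z) (N T : nat) :
  (0 < T < N)%N -> period_mod s (Z.of_nat N) T -> ~ complete_mod s (Z.of_nat N).
Proof.
case/andP=> T_pos TN HT Hc.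
have N0 : Z.of_nat N <> 0 by lia.
have hit (r : 'I_N) : exists k, (k < T)%N && ((s k - Z.of_nat r) mod Z.of_nat N == 0).
  have [n [_ Hn]] := Hc (Z.of_nat r).
  exists (n %% T)%N; rewrite ltn_mod T_pos /=; apply/eqP/Z.mod_divide => //.
  apply: dvd_sub_trans (dvd_sub_sym (period_mod_reduce n HT)) _.
  exact/Z.mod_divide.
pose f (r : 'I_N) : 'I_T := Ordinal (proj1 (andP (xchooseP (hit r)))).
have finj : injective f.
  move=> r1 r2 /(congr1 val) /= E.
  have /eqP/(Z.mod_divide _ _ N0) H1 := proj2 (andP (xchooseP (hit r1))).
  have /eqP/(Z.mod_divide _ _ N0) H2 := proj2 (andP (xchooseP (hit r2))).
  rewrite E in H1.
  have [q Hq] := dvd_sub_trans (dvd_sub_sym H1) H2.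
  apply: val_inj; have := ltn_ord r1; have := ltn_ord r2 => /= lt2 lt1.
  have q0 : q = 0 by nia.
  by rewrite q0 in Hq; lia.
by have := leq_card f finj; rewrite !card_ord; lia.
Qed.

Lemma dvd_mul_of_coprime n m x : Z.gcd n m = 1 -> (n | x) -> (m | x) -> (n * m | x).
Proof.
move=> g1 [k ->] Hm.
have [l ->] : (m | k) by apply: (Z.gauss _ n); [rewrite Z.mul_comm | rewrite Z.gcd_comm].
by exists l; ring.
Qed.

Lemma gcd_5 m : m mod 5 <> 0 -> Z.gcd 5 m = 1.
Proof.
move=> m5; rewrite -(Z.gcd_mod m 5) //.
have : m mod 5 = 1 \/ m mod 5 = 2 \/ m mod 5 = 3 \/ m mod 5 = 4.
  by have := Z.mod_pos_bound m 5; lia.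
by case=> [|[|[]]] ->.
Qed.

(* Modulo 5 every Gibonacci sequence has period 20; by linearity this is
   checked on the seeds (1, 0) and (0, 1). *)
Lemma G_period20_mod5 a b : period_mod (G a b) 5 20.
Proof.
apply: period_of_initial (golden_G a b) _ _; rewrite !(G_linear a b).
- change (5 | a * 2584 + b * 4181 - (a * -1 + b * 1)).
  by exists (517 * a + 836 * b); ring.
- change (5 | a * 4181 + b * 6765 - (a * 1 + b * 0)).
  by exists (836 * a + 1353 * b); ring.
Qed.

Lemma dvd_sub_mod m x : m <> 0 -> (m | x - x mod m).
Proof. by move=> m0; exists (x / m); rewrite Z.mod_eq //; ring. Qed.

Lemma G_mod5_reduce a b n n' :
  (n = n' %[mod 20])%N -> (5 | G a b n - G (a mod 5) (b mod 5) n').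
Proof.
move=> nn'; apply: (@dvd_sub_trans _ _ (G (a mod 5) (b mod 5) n)).
  rewrite (G_linear a b) (G_linear (a mod 5)).
  have -> : a * G 1 0 n + b * G 0 1 n - (a mod 5 * G 1 0 n + b mod 5 * G 0 1 n)
    = (a - a mod 5) * G 1 0 n + (b - b mod 5) * G 0 1 n by ring.
  by apply: Z.divide_add_r; apply: Z.divide_mul_l; apply: dvd_sub_mod.
apply: dvd_sub_trans (period_mod_reduce n (G_period20_mod5 _ _)) _.
by rewrite nn'; apply/dvd_sub_sym/period_mod_reduce/G_period20_mod5.
Qed.

(* The norm form a^2 + ab - b^2 of a + b(golden ratio); it is well defined
   modulo any m. *)
Definition golden_norm (a b : Z) : Z := a * a + a * b - b * b.

Lemma golden_norm_cong m a b a' b' :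
  (m | a - a') -> (m | b - b') -> (m | golden_norm a b - golden_norm a' b').
Proof.
move=> [k Hk] [l Hl].
have -> : a = a' + m * k by lia.
have -> : b = b' + m * l by lia.
exists (2 * a' * k + m * k * k + a' * l + k * b' + m * k * l - 2 * b' * l - m * l * l).
rewrite /golden_norm; ring.
Qed.

Definition residues5 : seq Z := [:: 0; 1; 2; 3; 4].

Lemma residues5_mod x : x mod 5 \in residues5.
Proof.
have : x mod 5 = 0 \/ x mod 5 = 1 \/ x mod 5 = 2 \/ x mod 5 = 3 \/ x mod 5 = 4.
  by have := Z.mod_pos_bound x 5; lia.
by case=> [|[|[|[|]]]] ->.
Qed.

(* Finite check: for every seed modulo 5 with nonzero norm, every start index
   n0 < 20 and every step c in 1..4, the terms G_(n0 + 4jc), j < 5, meet every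
   residue modulo 5 (the seed gives G_n = (A + Bn) 3^n modulo 5 with B != 0). *)
Definition mod5_table : bool :=
  all (fun a0 => all (fun b0 => (golden_norm a0 b0 mod 5 == 0) ||
    all (fun n0 => all (fun c => all (fun r =>
      has (fun j => (G a0 b0 (n0 + 4 * j * c) - r) mod 5 == 0) (iota 0 5))
      residues5) (iota 1 4)) (iota 0 20)) residues5) residues5.

Lemma mod5_table_ok : mod5_table.
Proof. by vm_compute. Qed.

Lemma mod5_hit a b n0 P R : ~ (5 | golden_norm a b) -> (P %% 5 != 0)%N ->
  exists j, (5 | G a b (n0 + 4 * j * P) - R).
Proof.
move=> Hn HP.
have Hn0 : golden_norm (a mod 5) (b mod 5) mod 5 != 0.
  apply/eqP => /Z.mod_divide H; apply: Hn.
  rewrite -(Z.sub_add (golden_norm (a mod 5) (b mod 5)) (golden_norm a b)).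
  by apply: Z.divide_add_r; [apply: golden_norm_cong; apply: dvd_sub_mod | apply: H].
move: mod5_table_ok => /allP/(_ _ (residues5_mod a))/allP/(_ _ (residues5_mod b)).
rewrite (negbTE Hn0) orFb => /allP/(_ (n0 %% 20)%N).
rewrite mem_iota ltn_mod => /(_ isT)/allP/(_ (P %% 5)%N).
rewrite mem_iota (_ : (1 <= P %% 5 < 1 + 4)%N); last by rewrite ltn_mod lt0n HP.
move=> /(_ isT)/allP/(_ _ (residues5_mod R))/hasP [j _ /eqP/Z.mod_divide Hj].
exists j.
have idx : (n0 + 4 * j * P = n0 %% 20 + 4 * j * (P %% 5) %[mod 20])%N.
  rewrite {1}(divn_eq n0 20) {1}(divn_eq P 5).
  rewrite (_ : _ + _ = (n0 %/ 20 + j * (P %/ 5)) * 20 + (n0 %% 20 + 4 * j * (P %% 5)))%N.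
    exact: modnMDl.
  ring.
apply: dvd_sub_trans (G_mod5_reduce a b idx) _.
exact: dvd_sub_trans (Hj ltac:(lia)) (dvd_sub_sym (@dvd_sub_mod 5 R ltac:(lia))).
Qed.

Section Eigen.
Local Open Scope ring_scope.
Variable R : comPzRingType.

(* The Binet component of u attached to the root r. *)
Definition eigen (r : R) (u : nat -> R) (n : nat) : R := u n.+1 - (1 - r) * u n.

Definition geom5 (y : R) : R := 1 + y + y ^+ 2 + y ^+ 3 + y ^+ 4.

Lemma eigen_geom (r : R) (u : nat -> R) :
  r ^+ 2 = r + 1 -> (forall n, u n.+2 = u n + u n.+1) ->
  forall n, eigen r u n = r ^+ n * eigen r u 0.
Proof.
move=> r_root u_rec; elim=> [|n IH]; first by rewrite mul1r.
rewrite exprS -mulrA -IH /eigen u_rec.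
have -> : r * (u n.+1 - (1 - r) * u n) = u n.+1 * r - (r - r ^+ 2) * u n by ring.
by rewrite r_root; ring.
Qed.
End Eigen.

(* If y is a root of 1 + X + ... + X^4 and yz = 1, then -(y + z) is a root of
   X^2 = X + 1 (the golden ratio as a sum of fifth roots of unity). *)
Lemma geom5_trace (K : fieldType) (y z : K) :
  geom5 y = 0%R -> (y * z = 1)%R -> ((- (y + z)) ^+ 2 = - (y + z) + 1)%R.
Proof.
move=> S0 yz; have y0 : y != 0%R.
  by apply: contra_eq_neq yz => ->; rewrite mul0r eq_sym oner_eq0.
have : (y ^+ 2 * ((- (y + z)) ^+ 2 - (- (y + z) + 1))
        = geom5 y + (y * z - 1) * (2%:R * y ^+ 2 + y * z + 1 + y))%R.
  by rewrite /geom5; ring.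
rewrite S0 yz subrr mul0r addr0 => /eqP.
rewrite mulf_eq0 expf_eq0 (negbTE y0) andbF orFb subr_eq0.
by move/eqP.
Qed.

Section GoldenRoot.
Local Open Scope ring_scope.
Variables (K : fieldType) (al : K).
Hypothesis al_root : al ^+ 2 = al + 1.

Lemma golden_root_conj : (1 - al) ^+ 2 = (1 - al) + 1.
Proof.
have -> : (1 - al) ^+ 2 = 1 - al - al + al ^+ 2 by ring.
by rewrite al_root; ring.
Qed.

Lemma golden_root_mul : al * (1 - al) = -1.
Proof.
have -> : al * (1 - al) = al - al ^+ 2 by ring.
by rewrite al_root; ring.
Qed.

Lemma golden_root_neq0 : al != 0.
Proof.
apply/eqP => al0; move: golden_root_mul; rewrite al0 mul0r => /eqP.
by rewrite eq_sym oppr_eq0 oner_eq0.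
Qed.

Lemma golden_roots s : s ^+ 2 = s + 1 -> s = al \/ s = 1 - al.
Proof.
move=> s_root; have : (s - al) * (s - (1 - al)) = 0.
  have -> : (s - al) * (s - (1 - al)) = (s ^+ 2 - s) - (al ^+ 2 - al) by ring.
  by rewrite s_root al_root; ring.
by move/eqP; rewrite mulf_eq0 !subr_eq0 => /orP[] /eqP; [left | right].
Qed.

Lemma golden_roots_distinct : 5%:R != 0 :> K -> al != 1 - al.
Proof.
move=> five0; apply/eqP => E.
have : (al - (1 - al)) ^+ 2 = 5%:R.
  have -> : (al - (1 - al)) ^+ 2 = 4%:R * al ^+ 2 - 4%:R * al + 1 by ring.
  by rewrite al_root; ring.
by rewrite -E subrr expr0n => /esym/eqP; rewrite (negbTE five0).
Qed.
End GoldenRoot.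

(* In characteristic p != 5, the Frobenius map either fixes the golden roots
   (p splits) or swaps them (p is inert). *)
Section Frobenius.
Local Open Scope ring_scope.
Variables (K : fieldType) (p : nat).
Hypothesis pcharK : p \in [pchar K].
Local Notation Fr := (pFrobenius_aut pcharK).
Variable al : K.
Hypothesis al_root : al ^+ 2 = al + 1.
Hypothesis five_neq0 : 5%:R != 0 :> K.

Lemma frobenius_conj x : Fr (1 - x) = 1 - Fr x.
Proof. by rewrite pFrobenius_autB_comm ?pFrobenius_aut1 //; apply: mulrC. Qed.

Lemma frobenius_golden : Fr al = al \/ Fr al = 1 - al.
Proof. by apply: (golden_roots al_root); rewrite -rmorphXn al_root rmorphD rmorph1. Qed.

Lemma frobenius_fixed_pow x : x != 0 -> Fr x = x -> x ^+ p.-1 = 1.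
Proof.
move=> x0 Fx; apply: (mulfI x0); rewrite mulr1 -exprS.
by rewrite prednK ?prime_gt0 ?(pcharf_prime pcharK) // -(pFrobenius_autE pcharK).
Qed.

(* Split case: every golden sequence in K has period p - 1, by the Binet formula. *)
Lemma split_period (u : nat -> K) : Fr al = al ->
  (forall n, u n.+2 = u n + u n.+1) -> forall n, u (n + p.-1)%N = u n.
Proof.
move=> Fal u_rec n.
have per r : r ^+ 2 = r + 1 -> Fr r = r -> eigen r u (n + p.-1) = eigen r u n.
  move=> r_root Fr_r; rewrite [LHS](eigen_geom r_root u_rec) [RHS](eigen_geom r_root u_rec) exprD.
  by rewrite (frobenius_fixed_pow (golden_root_neq0 r_root) Fr_r) mulr1.
have dif k : eigen al u k - eigen (1 - al) u k = (al - (1 - al)) * u k by rewrite /eigen; ring.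
have ne : al - (1 - al) != 0 by rewrite subr_eq0 golden_roots_distinct.
have Fal' : Fr (1 - al) = 1 - al by rewrite frobenius_conj Fal.
by apply: (mulfI ne); rewrite -!dif !per // golden_root_conj.
Qed.

(* From now on p is inert. *)
Hypothesis Fal : Fr al = 1 - al.

Lemma inert_not_fixed s : s ^+ 2 = s + 1 -> Fr s != s.
Proof.
case/(golden_roots al_root) => ->.
  by rewrite Fal eq_sym golden_roots_distinct.
by rewrite frobenius_conj Fal subKr golden_roots_distinct.
Qed.

Lemma inert_eigen_neq0 (x y : K) :
  Fr x = x -> Fr y = y -> (x != 0) || (y != 0) -> y - (1 - al) * x != 0.
Proof.
move=> Fx Fy; case: (eqVneq x 0) => [-> /= y0 | x0 _]; first by rewrite mulr0 subr0.
rewrite subr_eq0; apply/eqP => yE.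
have yE' : y = al * x.
  rewrite -{1}Fy yE pFrobenius_autM_comm; last exact: mulrC.
  by rewrite frobenius_conj Fal subKr Fx.
move: yE; rewrite yE' => /(mulIf x0) /eqP.
by rewrite (negbTE (golden_roots_distinct al_root five_neq0)).
Qed.

(* If y = al^T were a root of 1 + X + ... + X^4, then y has order 5, and
   y * Fr y = (-1)^T forces 5 | p + 1, so Fr y = y^-1. *)
Lemma inert_frobenius_norm T : geom5 (al ^+ T) = 0 -> al ^+ T * Fr (al ^+ T) = 1.
Proof.
set y := al ^+ T => S0.
have y5 : y ^+ 5 = 1.
  apply/eqP; rewrite -subr_eq0; apply/eqP.
  have -> : y ^+ 5 - 1 = (y - 1) * geom5 y by rewrite /geom5; ring.
  by rewrite S0 mulr0.
have [d prim_d d5] := prim_order_exists (isT : (0 < 5)%N) y5.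
have d_eq5 : d = 5%N.
  have /primeP [_ /(_ d d5) /orP [/eqP d1|/eqP //]] : prime 5 by [].
  move: (prim_expr_order prim_d); rewrite d1 expr1 => y1.
  have : geom5 y = 5%:R by rewrite /geom5 y1 !expr1n; ring.
  by rewrite S0 => /esym/eqP; rewrite (negbTE five_neq0).
rewrite d_eq5 in prim_d.
have yFy : y * Fr y = (-1) ^+ T by rewrite pFrobenius_autX Fal -exprMn golden_root_mul.
have yp1 : y ^+ p.+1 = (-1) ^+ T by rewrite exprS -(pFrobenius_autE pcharK).
have : (5 %| p.+1)%N.
  rewrite -(@Gauss_dvdr 5 2) // (prim_order_dvd prim_d) mulnC exprM yp1.
  by rewrite -exprM mulnC exprM sqrrN !expr1n.
by rewrite (prim_order_dvd prim_d) yp1 -yFy => /eqP.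
Qed.

(* In the inert case no power of al is a root of 1 + X + ... + X^4: otherwise
   -(y + y^-1) would be a Frobenius-fixed golden root. *)
Lemma inert_geom5_neq0 T : geom5 (al ^+ T) != 0.
Proof.
apply/eqP => S0; have yz := inert_frobenius_norm S0.
set y := al ^+ T in S0 yz.
have Fz : Fr (Fr y) = y.
  have zFz : Fr y * Fr (Fr y) = 1.
    by rewrite -pFrobenius_autM_comm ?yz ?pFrobenius_aut1 //; apply: mulrC.
  by rewrite -[Fr (Fr y)]mul1r -yz -mulrA zFz mulr1.
have := inert_not_fixed (geom5_trace S0 yz).
rewrite pFrobenius_autN pFrobenius_autD_comm; last exact: mulrC.
by rewrite Fz addrC eqxx.
Qed.
End Frobenius.

Section Reduction.
Local Open Scope ring_scope.
Variables (K : fieldType) (p : nat).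
Hypothesis pcharK : p \in [pchar K].
Local Notation Fr := (pFrobenius_aut pcharK).

Definition toK (z : Z) : K := (int_of_Z z)%:~R.

Lemma toKD x y : toK (x + y) = toK x + toK y.
Proof. by rewrite /toK (rmorphD int_of_Z) intrD. Qed.

Lemma toKB x y : toK (x - y) = toK x - toK y.
Proof. by rewrite /toK (rmorphB int_of_Z) intrB. Qed.

Lemma toK_frobenius z : Fr (toK z) = toK z.
Proof. by rewrite /toK rmorph_int. Qed.

Lemma toK_eq0 z : toK z = 0 <-> (Z.of_nat p | z).
Proof.
rewrite /toK; split => [/eqP | [k ->]].
  by rewrite -(dvdz_pcharf pcharK) => /dvdzP [q Hq]; exists (Z_of_int q); lia.
apply/eqP; rewrite -(dvdz_pcharf pcharK); apply/dvdzP; exists (int_of_Z k); lia.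
Qed.

Lemma toK_golden (s : nat -> Z) : golden s -> forall n, toK (s n.+2) = toK (s n) + toK (s n.+1).
Proof. by move=> gs n; rewrite gs toKD. Qed.
End Reduction.

Definition fifth_sum (s : nat -> Z) (P n : nat) : Z :=
  (s n + s (n + P)%N + s (n + P * 2)%N + s (n + P * 3)%N + s (n + P * 4)%N)%Z.

Lemma golden_root_exists (K : closedFieldType) : exists al : K, (al ^+ 2 = al + 1)%R.
Proof.
have [x Hx] := @solve_monicpoly K 2%N (fun _ => 1%R) isT.
by exists x; rewrite Hx big_ord_recr big_ord1 /= !mul1r expr0 expr1 addrC.
Qed.

(* The dichotomy modulo a prime p != 5, read off in an algebraic closure of
   F_p: either all golden sequences have period p - 1 modulo p, or the
   five-term sums of a golden sequence nonzero modulo p cannot all vanish. *)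
Lemma golden_mod_prime_dichotomy (p : nat) : prime p -> p != 5%N ->
  (forall s, golden s -> period_mod s (Z.of_nat p) p.-1) \/
  (forall s P, golden s -> ~ ((Z.of_nat p | s 0%N) /\ (Z.of_nat p | s 1%N)) ->
     ~ ((Z.of_nat p | fifth_sum s P 0) /\ (Z.of_nat p | fifth_sum s P 1))).
Proof.
move=> pp p5; have [K [FtoK _]] := countable_algebraic_closure 'F_p.
have pcharK : p \in [pchar K]%R := rmorph_pchar FtoK (pchar_Fp pp).
have five_neq0 : (5%:R != 0 :> K)%R by rewrite -(dvdn_pcharf pcharK) dvdn_prime2.
have [al al_root] := golden_root_exists K.
case: (frobenius_golden pcharK al_root) => Fal; [left | right].
  move=> s gs n; apply/(toK_eq0 pcharK).
  by rewrite toKB (split_period al_root five_neq0 Fal (toK_golden K gs)) subrr.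
move=> s P gs nz [H0 H1].
pose u n := toK K (s n); pose v n := toK K (fifth_sum s P n).
have E0 : (eigen al u 0 != 0)%R.
  apply: (inert_eigen_neq0 al_root five_neq0 Fal); rewrite ?toK_frobenius //.
  rewrite -negb_and; apply/negP => /andP [/eqP /(toK_eq0 pcharK) ? /eqP /(toK_eq0 pcharK) ?].
  by apply: nz.
have geomP k : eigen al u (P * k) = ((al ^+ P) ^+ k * eigen al u 0)%R.
  by rewrite -exprM; apply: eigen_geom (toK_golden K gs) _.
have : eigen al v 0 = (geom5 (al ^+ P) * eigen al u 0)%R.
  have -> : eigen al v 0 = (eigen al u (P * 0) + eigen al u (P * 1) + eigen al u (P * 2)
      + eigen al u (P * 3) + eigen al u (P * 4))%R.
    by rewrite /v /u /fifth_sum /eigen !toKD muln0 muln1 !add0n !add1n; ring.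
  by rewrite !geomP /geom5 expr0 expr1; ring.
rewrite /eigen /v (proj2 (toK_eq0 pcharK _) H0) (proj2 (toK_eq0 pcharK _) H1) mulr0 subr0.
move/esym/eqP; rewrite mulf_eq0 (negbTE E0) orbF.
by rewrite (negbTE (inert_geom5_neq0 al_root five_neq0 Fal P)).
Qed.

Lemma fifth_sum_shift_sub (s : nat -> Z) P n :
  fifth_sum (fun k => s (k + P)%N - s k) P n = s (n + P * 5)%N - s n.
Proof.
rewrite /fifth_sum (_ : n + P + P = n + P * 2)%N; last by lia.
rewrite (_ : n + P * 2 + P = n + P * 3)%N; last by lia.
rewrite (_ : n + P * 3 + P = n + P * 4)%N; last by lia.
rewrite (_ : n + P * 4 + P = n + P * 5)%N; last by lia.
ring.
Qed.

Lemma complete_mod_dvd (s : nat -> Z) m d :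
  m <> 0 -> 0 < d -> (d | m) -> complete_mod s m -> complete_mod s d.
Proof.
move=> m0 d_pos dm Hc r; have [n [n1 Hn]] := Hc r; exists n; split => //.
apply/Z.mod_divide; first lia.
by apply: Z.divide_trans dm _; apply/Z.mod_divide.
Qed.

Lemma primitive_reduction (h : nat -> Z) m :
  golden h -> 0 < m -> ~ ((m | h 0%N) /\ (m | h 1%N)) ->
  exists (p : nat) (g : Z) (h' : nat -> Z),
    [/\ prime p, (Z.of_nat p * g | m), golden h', forall n, h n = g * h' n
      & ~ ((Z.of_nat p | h' 0%N) /\ (Z.of_nat p | h' 1%N))].
Proof.
move=> gh m_pos nz.
set g := Z.gcd (Z.gcd (h 0%N) (h 1%N)) m.
have [m' mE] : (g | m) := Z.gcd_divide_r _ _.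
have g_pos : 0 < g.
  have : g <> 0 by move/Z.gcd_eq_0 => [_]; lia.
  by have := Z.gcd_nonneg (Z.gcd (h 0%N) (h 1%N)) m; lia.
have gh_all : forall n, (g | h n).
  apply: golden_dvd gh _ _; apply: Z.divide_trans (Z.gcd_divide_l _ m) _.
    exact: Z.gcd_divide_l.
  exact: Z.gcd_divide_r.
pose h' n := h n / g.
have hE n : h n = g * h' n := Zdivide_Zdiv_eq _ _ g_pos (gh_all n).
have gh' : golden h'.
  move=> n; apply: (Z.mul_reg_l _ _ g); first lia.
  by rewrite Z.mul_add_distr_l -!hE; apply: gh.
have m'_gt1 : 1 < m'.
  suff : m' <> 1 by nia.
  by move=> m'1; apply: nz; rewrite mE m'1 Z.mul_1_l; split; apply: gh_all.
set p := pdiv (Z.to_nat m').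
have pp : prime p by apply: pdiv_prime; lia.
have [k kE] : (Z.of_nat p | m').
  by have [k kE] := dvdnP (pdiv_dvd (Z.to_nat m')); exists (Z.of_nat k); nia.
have pgm : (Z.of_nat p * g | m) by exists k; rewrite mE kE; ring.
exists p, g, h'; split => // -[[k0 E0] [k1 E1]].
have : (Z.of_nat p * g | g).
  apply: Z.gcd_greatest => //; apply: Z.gcd_greatest.
    by exists k0; rewrite hE E0; ring.
  by exists k1; rewrite hE E1; ring.
by move/(Z.divide_pos_le _ _ g_pos); have := prime_gt1 pp; nia.
Qed.

(* A prime p | m is either split, contradicting completeness
   modulo p, or inert, contradicting the dichotomy. *)
Lemma fifth_sums_not_all_divisible a b m (h : nat -> Z) P :
  0 < m -> ~ (5 | m) -> complete_mod (G a b) m ->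
  golden h -> ~ ((m | h 0%N) /\ (m | h 1%N)) -> (forall n, (m | fifth_sum h P n)) -> False.
Proof.
move=> m_pos m5 Hc gh nz sums.
have [p [g [h' [pp pgm gh' hE nz']]]] := primitive_reduction gh m_pos nz.
have g0 : g <> 0 by move=> g0; case: pgm => k; rewrite g0; lia.
have pm : (Z.of_nat p | m) by apply: Z.divide_trans pgm; exists g; ring.
have p5 : p != 5%N by apply/eqP => p5; apply: m5; rewrite p5 in pm.
have sums' n : (Z.of_nat p | fifth_sum h' P n).
  apply/(Z.mul_divide_cancel_r _ _ _ g0); apply: Z.divide_trans pgm _.
  rewrite (_ : fifth_sum h' P n * g = fifth_sum h P n); first exact: sums.
  by rewrite /fifth_sum !hE; ring.
have Hcp : complete_mod (G a b) (Z.of_nat p).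
  by apply: complete_mod_dvd pm Hc; [lia | have := prime_gt0 pp; lia].
case: (golden_mod_prime_dichotomy pp p5) => [split | inert].
  apply: (not_complete_of_period _ (split _ (golden_G a b)) Hcp).
  by have := prime_gt1 pp; lia.
exact: inert h' P gh' nz' (conj (sums' 0%N) (sums' 1%N)).
Qed.

(* Hence G has a period modulo m not divisible by 5: if Q = 5P is a period but
   P is not, the sequence G(n + P) - G(n) contradicts the key step. *)
Lemma period_prime_to_5 a b m : 0 < m -> ~ (5 | m) -> complete_mod (G a b) m ->
  forall Q, (0 < Q)%N -> period_mod (G a b) m Q ->
  exists2 P, (P %% 5 != 0)%N & period_mod (G a b) m P.
Proof.
move=> m_pos m5 Hc; elim/ltn_ind => Q IH Q_pos HQ.
have [/eqP Q5 | ] := boolP (Q %% 5 == 0)%N; last by exists Q.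
set P := (Q %/ 5)%N.
have QE : Q = (P * 5)%N by rewrite /P {1}(divn_eq Q 5) Q5 addn0.
pose h n := G a b (n + P)%N - G a b n.
have gh : golden h := golden_shift_sub P (golden_G a b).
have [[H0 H1] | nz] : ((m | h 0%N) /\ (m | h 1%N)) \/ ~ ((m | h 0%N) /\ (m | h 1%N)).
  by case: (Zdivide_dec m (h 0%N)); case: (Zdivide_dec m (h 1%N)); tauto.
- apply: (IH P); [rewrite QE; lia | rewrite QE in Q_pos; lia |].
  exact: period_of_initial (golden_G a b) H0 H1.
- exfalso; apply: (fifth_sums_not_all_divisible m_pos m5 Hc gh nz (P := P)) => n.
  by rewrite fifth_sum_shift_sub -QE.
Qed.

Theorem mainTheorem17 (a b m : Z) :
  Z.gcd a b = 1 ->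
  (a * a + a * b - b * b) mod 5 <> 0 ->
  1 <= m ->
  m mod 5 <> 0 ->
  complete_mod (G a b) m ->
  complete_mod (G a b) (5 * m).
Proof.
move=> _ norm5 m_ge1 m5 Hc R.
have m_pos : 0 < m by lia.
have m5' : ~ (5 | m) by rewrite -Z.mod_divide.
have norm5' : ~ (5 | golden_norm a b) by rewrite -Z.mod_divide.
have [Q Q_pos HQ] := golden_period_exists (golden_G a b) m_pos.
have [P P5 HP] := period_prime_to_5 m_pos m5' Hc Q_pos HQ.
have [n0 [n0_pos Hn0]] := Hc R.
have [j Hj] := mod5_hit n0 R norm5' P5.
exists (n0 + 4 * j * P)%N; split; first lia.
apply/Z.mod_divide; first lia.
apply: dvd_mul_of_coprime (gcd_5 m5) Hj _.
apply: dvd_sub_trans (period_mul (4 * j) HP n0) _.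
by apply/Z.mod_divide => //; lia.
Qed.
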